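(* Let $\mathbb{F}$ be a finite field and $n\ge2$. Let $\mathcal{F}: 0\subsetneq V_1\subsetneq V_2=\mathbb{F}^n$ and $\mathcal{F}': 0\subsetneq V'_1\subsetneq V'_2=\mathbb{F}^n$ be two flags of length $2$. Then the semigroups $\varphi(\mathcal{F})$ and $\varphi(\mathcal{F}')$ are isomorphic if and only if $\{\dim V_1,\dim(V_2/V_1)\}=\{\dim V'_1,\dim(V'_2/V'_1)\}$.
   Context: $M(n,\mathbb{F})$ is the semigroup of $n\times n$ matrices over $\mathbb{F}$, identified with linear operators on $\mathbb{F}^n$. For a flag $\mathcal{F}: 0=V_0\subsetneq V_1\subsetneq\cdots\subsetneq V_k=\mathbb{F}^n$, $\varphi(\mathcal{F})=\{a\in M(n,\mathbb{F}) : a(V_i)\subseteq V_{i-1}\text{ for all } i=1,\dots,k\}$. Isomorphism means semigroup isomorphism. *)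

From HB Require Import structures.
From mathcomp Require Import all_boot all_order all_algebra.
Set Implicit Arguments. Unset Strict Implicit. Unset Printing Implicit Defensive.
Import GRing.Theory.
Local Open Scope ring_scope.

(* Matrices 'M[F]_n act on row vectors by right multiplication: v |-> v *m a.
   Subspaces of F^n are represented by row spaces of matrices (mxalgebra, %MS).
   A flag of length 2: 0 < V1 < V2 = F^n, with V1 : 'M[F]_n (row space).
   phi2 V1 = { a | a(V2) <= V1 and a(V1) <= V0 = 0 }. *)
Definition phi2 (F : fieldType) (n : nat) (V1 : 'M[F]_n) : pred 'M[F]_n :=
  [pred a : 'M[F]_n | (1%:M *m a <= V1)%MS && (V1 *m a <= (0 : 'M[F]_n))%MS].

Definition semigroup_isomorphic (F : fieldType) (n : nat)
    (S T : pred 'M[F]_n) : Prop :=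
  exists f : 'M[F]_n -> 'M[F]_n,
    [/\ {in S, forall x, f x \in T},
        {in S &, injective f},
        {in T, forall y, exists2 x, x \in S & f x = y}
      & {in S &, forall x y, f (x *m y) = f x *m f y}].

From HB Require Import structures.
From mathcomp Require Import all_boot all_order all_algebra zify.
Set Implicit Arguments. Unset Strict Implicit. Unset Printing Implicit Defensive.
Import GRing.Theory.
Local Open Scope ring_scope.

(* Every product of two elements of [phi2 V1] vanishes, so [phi2 V1] is a null
   semigroup with zero, and two null semigroups with zero are isomorphic as soon
   as they have the same cardinality.  Conjugating [V1] to a coordinate subspace
   of dimension [k] shows [#|phi2 V1| = q ^ ((n - k) * k)] with [q = #|F|], and
   [(n - k) * k] determines the pair [{k, n - k}]. *)

Section FiniteBijection.

Variables (T : finType) (S1 S2 : pred T) (z : T).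
Hypotheses (S1z : z \in S1) (S2z : z \in S2) (eq_card_S : #|S1| = #|S2|).

(* Match the i-th element of [S1 \ {z}] with the i-th element of [S2 \ {z}];
   every point outside [S1 \ {z}] (z included) is sent to [z]. *)
Lemma exists_in_bij_fix : exists f : T -> T,
  [/\ f z = z, {in S1, forall x, f x \in S2}, {in S1 &, injective f}
    & {in S2, forall y, exists2 x, x \in S1 & f x = y}].
Proof.
pose s1 := enum [predD1 S1 & z]; pose s2 := enum [predD1 S2 & z].
have s1P x : (x \in s1) = (x != z) && (x \in S1) by rewrite mem_enum inE.
have s2P x : (x \in s2) = (x != z) && (x \in S2) by rewrite mem_enum inE.
have size_s : size s1 = size s2.
  have := cardD1 z S1; rewrite S1z eq_card_S (cardD1 z S2) S2z /s1 /s2 -!cardE.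
  by move/addnI.
pose f x := nth z s2 (index x s1).
have f_out x : x \notin s1 -> f x = z.
  by move=> x_out; rewrite /f (memNindex x_out) nth_default // size_s.
have f_in x : x \in s1 -> f x \in s2.
  by move=> x_in; rewrite /f mem_nth // -size_s index_mem.
have fz : f z = z by rewrite f_out // s1P eqxx.
exists f; split=> //.
- move=> x xS1; have [/f_in|/f_out ->//] := boolP (x \in s1).
  by rewrite s2P => /andP[].
- move=> x y xS1 yS1.
  have [x_in|x_out] := boolP (x \in s1); have [y_in|y_out] := boolP (y \in s1).
  + move/eqP; rewrite /f nth_uniq ?enum_uniq -?size_s ?index_mem // => /eqP fxy.
    by rewrite -(nth_index z x_in) fxy nth_index.
  + rewrite (f_out y y_out) => fxz.
    by move: (f_in x x_in); rewrite s2P fxz eqxx.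
  + rewrite (f_out x x_out) => fyz.
    by move: (f_in y y_in); rewrite s2P -fyz eqxx.
  + by move: x_out y_out; rewrite !s1P xS1 yS1 !andbT !negbK => /eqP-> /eqP->.
- move=> y yS2; have [->|ynz] := eqVneq y z; first by exists z.
  have y_in : y \in s2 by rewrite s2P ynz.
  have lt_index : (index y s2 < size s1)%N by rewrite size_s index_mem.
  have x_in : nth z s1 (index y s2) \in s1 by rewrite mem_nth.
  exists (nth z s1 (index y s2)); first by move: x_in; rewrite s1P => /andP[].
  by rewrite /f index_uniq ?enum_uniq // nth_index.
Qed.

End FiniteBijection.

Section NullSemigroup.

Variables (F : finFieldType) (n : nat) (S T : pred 'M[F]_n).
Hypotheses (S0 : 0 \in S) (T0 : 0 \in T).
Hypotheses (S_null : {in S &, forall x y, x *m y = 0})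
           (T_null : {in T &, forall x y, x *m y = 0}).

Lemma null_semigroup_isomorphicE : semigroup_isomorphic S T <-> #|S| = #|T|.
Proof.
split=> [[f [fST f_inj f_onto _]] | eq_card_ST].
  rewrite -(card_in_image f_inj); apply: eq_card => y.
  apply/imageP/idP => [[x xS ->]|/f_onto[x xS <-]]; first exact: fST.
  by exists x.
have [f [f0 fST f_inj f_onto]] := exists_in_bij_fix S0 T0 eq_card_ST.
exists f; split=> // x y xS yS.
by rewrite S_null // f0 T_null ?fST.
Qed.

End NullSemigroup.

Section Phi2.

Variables (F : fieldType) (n : nat).
Implicit Types V W a b P : 'M[F]_n.

Lemma phi2P V a : (a \in phi2 V) = (a <= V)%MS && (V *m a == 0).
Proof. by rewrite inE /= mul1mx submx0. Qed.

Lemma phi2_0 V : 0 \in phi2 V.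
Proof. by rewrite phi2P sub0mx mulmx0 eqxx. Qed.

Lemma phi2_mul_eq0 V : {in phi2 V &, forall a b, a *m b = 0}.
Proof.
move=> a b; rewrite !phi2P => /andP[/submxP[D ->] _] /andP[_ /eqP Vb0].
by rewrite -mulmxA Vb0 mulmx0.
Qed.

Lemma phi2_eqmx V W : (V :=: W)%MS -> phi2 V =i phi2 W.
Proof. by move=> eqVW a; rewrite !phi2P eqVW -!submx0 (eqmxMr a eqVW). Qed.

Lemma phi2_conjmx V P a : P \in unitmx ->
  a \in phi2 V -> invmx P *m a *m P \in phi2 (V *m P).
Proof.
move=> Punit; rewrite !phi2P => /andP[aV /eqP Va0]; apply/andP; split.
  by rewrite submxMr // (submx_trans (submxMl _ _)).
by rewrite !mulmxA mulmxK // Va0 mul0mx.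
Qed.

Lemma phi2_pidP k b : (k <= n)%N -> reflect
  (forall i j : 'I_n, ~~ ((k <= i)%N && (j < k)%N) -> b i j = 0)
  (b \in phi2 (pid_mx k)).
Proof.
move=> kn.
have pid_diag : (pid_mx k : 'M[F]_n) = diag_mx (\row_j ((j < k)%N)%:R).
  apply/matrixP=> i j; rewrite !mxE.
  by have [->|ne] := eqVneq i j; rewrite ?eqxx ?mulr1n // val_eqE (negbTE ne).
rewrite phi2P; have -> : (b <= (pid_mx k : 'M_n))%MS = (b *m pid_mx k == b).
  apply/idP/idP => [/submxP[D ->]|/eqP <-]; last exact: submxMl.
  by rewrite -mulmxA pid_mx_id.
rewrite pid_diag mul_mx_diag mul_diag_mx.
apply: (iffP andP) => [[/eqP/matrixP bpid /eqP/matrixP pidb] i j | b0].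
  rewrite negb_and -ltnNge => /orP[ik|jk].
    by move: (pidb i j); rewrite !mxE ik mul1r.
  by move: (bpid i j); rewrite !mxE (negbTE jk) mulr0 => <-.
split; apply/eqP/matrixP => i j; rewrite !mxE.
  by case jk: (j < k)%N; rewrite ?mulr1 // mulr0 b0 // jk andbF.
by case ik: (i < k)%N; rewrite ?mul0r // b0 ?mulr0 // leqNgt ik.
Qed.

End Phi2.

Section CardPhi2.

Variables (F : finFieldType) (n : nat).
Implicit Types V P : 'M[F]_n.

Lemma card_ord_lt k : (k <= n)%N -> #|[set j : 'I_n | (j < k)%N]| = k.
Proof.
move=> kn; have widen_inj : injective (widen_ord kn).
  by move=> x y eq_xy; apply: val_inj; exact: (congr1 val eq_xy).
rewrite -[RHS](card_ord k) -(card_image widen_inj).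
apply: eq_card => j; rewrite inE.
apply/idP/imageP => [jk|[x _ ->]]; last by rewrite /= ltn_ord.
by exists (Ordinal jk) => //; apply: val_inj.
Qed.

Lemma card_ord_ge k : (k <= n)%N -> #|[set j : 'I_n | (k <= j)%N]| = (n - k)%N.
Proof.
move=> kn; have := cardsC [set j : 'I_n | (j < k)%N].
rewrite card_ord card_ord_lt // => card_n; rewrite -[in RHS]card_n addKn.
by apply: eq_card => j; rewrite !inE leqNgt.
Qed.

Lemma card_phi2_pid k : (k <= n)%N ->
  #|phi2 (pid_mx k : 'M[F]_n)| = (#|F| ^ ((n - k) * k))%N.
Proof.
move=> kn.
pose D := setX [set i : 'I_n | (k <= i)%N] [set j : 'I_n | (j < k)%N].
pose entries (b : 'M[F]_n) := [ffun ij : 'I_n * 'I_n => b ij.1 ij.2].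
have entries_bij : bijective entries.
  exists (fun f : {ffun 'I_n * 'I_n -> F} => \matrix_(i, j) f (i, j)) => [b|f].
    by apply/matrixP => i j; rewrite !(mxE, ffunE).
  by apply/ffunP => -[i j]; rewrite !(mxE, ffunE).
transitivity #|pffun_on (0 : F) (mem D) predT|; last first.
  by rewrite card_pffun_on cardsX card_ord_ge // card_ord_lt.
rewrite -(on_card_preimset (onW_bij _ entries_bij)); apply: eq_card => b.
rewrite in_set; apply/(phi2_pidP b kn)/pffun_onP.
  move=> b0; split=> //; apply/supportP => -[i j].
  by rewrite ffunE in_setX !inE; apply: b0.
move=> [/supportP b0 _] i j ijD.
by have := b0 (i, j); rewrite ffunE in_setX !inE; apply.
Qed.

Lemma leq_card_phi2_mulmx V P : P \in unitmx ->
  (#|phi2 V| <= #|phi2 (V *m P)|)%N.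
Proof.
move=> Punit; have conj_inj : injective (fun a => invmx P *m a *m P).
  apply: can_inj (fun a => P *m a *m invmx P) _ => a.
  by rewrite !mulmxA mulmxK // mulmxV ?mul1mx.
rewrite -(card_in_image (in2W conj_inj)); apply/subset_leq_card/subsetP.
by move=> _ /imageP[a aV ->]; exact: phi2_conjmx.
Qed.

Lemma card_phi2_mulmx V P : P \in unitmx -> #|phi2 (V *m P)| = #|phi2 V|.
Proof.
move=> Punit; apply/eqP; rewrite eqn_leq leq_card_phi2_mulmx // andbT.
by rewrite -{2}(mulmxK Punit V) leq_card_phi2_mulmx ?unitmx_inv.
Qed.

Lemma card_phi2 V : #|phi2 V| = (#|F| ^ ((n - \rank V) * \rank V))%N.
Proof.
have rVn := rank_leq_row V.
have [P Punit eqV] := eq_rank_unitmx (rank_pid_mx F rVn rVn).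
by rewrite (eq_card (phi2_eqmx eqV)) card_phi2_mulmx // card_phi2_pid.
Qed.

End CardPhi2.

Lemma mul_subn_eq_pair (n k k' : nat) : (k <= n)%N -> (k' <= n)%N ->
  ((n - k) * k = (n - k') * k')%N <-> [:: k; (n - k)%N] =i [:: k'; (n - k')%N].
Proof.
move=> kn k'n; split=> [eq_prod|eq_pair].
  have [<- //|->] : k = k' \/ k' = (n - k)%N by nia.
  by move=> x; rewrite subKn // !inE orbC.
move: (eq_pair k'); rewrite !inE eqxx => /orP[/eqP->|/eqP->] //.
by rewrite subKn // mulnC.
Qed.

Theorem lemma12 (F : finFieldType) (n : nat) (V1 V1' : 'M[F]_n) :
  (2 <= n)%N ->
  ((0 : 'M[F]_n) < V1)%MS -> (V1 < 1%:M)%MS ->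
  ((0 : 'M[F]_n) < V1')%MS -> (V1' < 1%:M)%MS ->
  semigroup_isomorphic (phi2 V1) (phi2 V1') <->
  [:: \rank V1; (n - \rank V1)%N] =i [:: \rank V1'; (n - \rank V1')%N].
Proof.
move=> _ _ _ _ _.
have card_F_gt1 : (1 < #|F|)%N.
  by apply/card_gt1P; exists 0, 1; rewrite !inE eq_sym oner_eq0.
rewrite -mul_subn_eq_pair ?rank_leq_row //.
rewrite (null_semigroup_isomorphicE (phi2_0 V1) (phi2_0 V1'));
  [|exact: phi2_mul_eq0 | exact: phi2_mul_eq0].
by rewrite !card_phi2; split=> [/(expnI card_F_gt1)|->].
Qed.
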